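(* For any integer $t\geq 4$, there exist a connected graph $G$ and a function $g:V(G_1)\to V(G_2)$ such that $Dist(G)+Dist(F_G)=t$.
   Context: $Dist(H)$ is the least $t$ such that $H$ has a labeling $V(H)\to\{1,\dots,t\}$ preserved by no non-identity automorphism of $H$. Functigraph: for disjoint copies $G_1,G_2$ of a connected graph $G$ and a function $g:V(G_1)\to V(G_2)$, $F_G$ has vertex set $V(G_1)\cup V(G_2)$ and edge set $E(G_1)\cup E(G_2)\cup\{uv: u\in V(G_1),\ g(u)=v\}$. *)

From mathcomp Require Import all_boot all_fingroup.
Set Implicit Arguments. Unset Strict Implicit. Unset Printing Implicit Defensive.

Definition simple_graph (T : finType) (e : rel T) : Prop :=
  (forall x y, e x y = e y x) /\ (forall x, ~~ e x x).

Definition connected_graph (T : finType) (e : rel T) : Prop :=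
  (exists x : T, True) /\ (forall x y : T, connect e x y).

Definition is_aut (T : finType) (e : rel T) (s : {perm T}) : Prop :=
  forall x y, e (s x) (s y) = e x y.

Definition distinguishing (T : finType) (e : rel T) (t : nat) : Prop :=
  exists f : T -> nat,
    (forall x, 1 <= f x <= t) /\
    (forall s : {perm T}, is_aut e s -> (forall x, f (s x) = f x) -> s = 1%g).

Definition is_Dist (T : finType) (e : rel T) (d : nat) : Prop :=
  distinguishing e d /\ (forall t, distinguishing e t -> d <= t).

(* Functigraph F_G: vertices inl u (copy G_1) and inr v (copy G_2);
   edges of both copies plus u--g(u) for u in G_1. *)
Definition functigraph (T : finType) (e : rel T) (g : T -> T) : rel (T + T) :=
  fun a b =>
    match a, b with
    | inl u, inl v => e u v
    | inr u, inr v => e u v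
    | inl u, inr v => g u == v
    | inr v, inl u => g u == v
    end.

From mathcomp Require Import all_boot all_fingroup.
From mathcomp Require Import zify.
Set Implicit Arguments. Unset Strict Implicit. Unset Printing Implicit Defensive.

(* Take G = K_{1,m} with m >= 2.  Swapping two twins (vertices with the same
   neighbourhood) is an automorphism, so a distinguishing labeling is
   injective on every set of twins; the m leaves of G are twins, and labelling
   them 1..m distinguishes G since the centre is told apart by its degree.
   Hence Dist(G) = m.  If g sends all of G_1 to the centre of G_2, the largest
   twin class of F_G consists of the m leaves of G_1 and again
   Dist(F_G) = m; if instead g sends the centre of G_1 to a leaf of G_2, that
   leaf joins the twin class and Dist(F_G) = m + 1.  The sums 2m and 2m + 1
   cover every t >= 4. *)

Section Twins.
Variables (T : finType) (e : rel T).

Definition nbhd (x : T) : {set T} := [set z | e x z].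

Definition deg (x : T) : nat := #|nbhd x|.

Lemma deg_aut s x : is_aut e s -> deg (s x) = deg x.
Proof.
move=> s_aut; rewrite /deg -(card_preimset _ (@perm_inj _ s)).
by apply: eq_card => z; rewrite !inE s_aut.
Qed.

Lemma deg_ge (x : T) (s : seq T) : uniq s -> {subset s <= nbhd x} -> size s <= deg x.
Proof. by move=> s_uniq /subsetP s_sub; rewrite -(card_uniqP s_uniq) subset_leq_card. Qed.

Lemma distinguishing_of_decode (t m : nat) (f : T -> nat) (decode : nat -> nat -> T) :
  (forall x, 1 <= f x <= t) -> (forall x, decode (f x) (minn (deg x) m) = x) ->
  distinguishing e t.
Proof.
move=> f_range f_decode; exists f; split=> // s s_aut s_f.
apply/permP => x.
by rewrite perm1 -{2}(f_decode x) -s_f -(deg_aut x s_aut) f_decode.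
Qed.

Hypothesis e_sym : symmetric e.

Lemma tperm_twins_aut x y : nbhd x = nbhd y -> is_aut e (tperm x y).
Proof.
move=> /setP nbhd_xy.
have e_xy z : e x z = e y z by have := nbhd_xy z; rewrite !inE.
have e_tperm a z : e (tperm x y a) z = e a z by case: tpermP => [->|->|].
by move=> a z; rewrite e_tperm e_sym e_tperm e_sym.
Qed.

Lemma twins_card_le (S : {set T}) t :
  {in S &, forall x y, nbhd x = nbhd y} -> distinguishing e t -> #|S| <= t.
Proof.
move=> S_twins [f [f_range f_dist]].
have f_inj : {in S &, injective f}.
  move=> x y xS yS fxy.
  have f_tperm z : f (tperm x y z) = f z by case: tpermP => [->|->|].
  have /permP/(_ x) := f_dist _ (tperm_twins_aut (S_twins x y xS yS)) f_tperm.
  by rewrite tpermL perm1.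
rewrite cardE -(size_map f) -(size_iota 1 t); apply: uniq_leq_size.
  by rewrite map_inj_in_uniq ?enum_uniq // => x y; rewrite !mem_enum; apply: f_inj.
by move=> _ /mapP [x _ ->]; rewrite mem_iota; have := f_range x; lia.
Qed.

End Twins.

Section Star.
Variable n : nat.

(* K_{1,n+2}: centre None, leaves Some i. *)
Definition star : rel (option 'I_n.+2) := fun x y => (x == None) != (y == None).

Lemma star_sym : symmetric star.
Proof. by move=> x y; rewrite /star eq_sym. Qed.

Lemma star_simple : simple_graph star.
Proof. by split=> [|x]; [exact: star_sym | rewrite /star eqxx]. Qed.

Lemma star_connected : connected_graph star.
Proof.
split; first by exists None.
have to_centre x : connect star x None.
  by case: x => [i|]; [apply: connect1 | apply: connect0].
move=> x y; apply: connect_trans (to_centre x) _.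
by rewrite (sym_connect_sym star_sym) to_centre.
Qed.

Lemma nbhd_star_leaf i : nbhd star (Some i) = [set None].
Proof. by apply/setP => -[j|]; rewrite !inE. Qed.

Lemma deg_star_centre : 2 <= deg star None.
Proof.
apply: (@deg_ge _ _ _ [:: Some ord0; Some ord_max]) => // z.
by rewrite !inE => /orP [] /eqP ->.
Qed.

Lemma star_Dist : is_Dist star n.+2.
Proof.
split=> [|t].
  apply: (distinguishing_of_decode (m := 2)
    (f := fun x : option 'I_n.+2 => if x is Some i then i.+1 else 1)
    (decode := fun l k => if k == 2 then None else Some (inord l.-1))).
    by case=> [i|] //=; rewrite ltn_ord.
  case=> [i|]; last by rewrite (minn_idPr deg_star_centre).
  by rewrite /deg nbhd_star_leaf cards1 /= inord_val.
move=> /(twins_card_le star_sym (S := [set Some i | i : 'I_n.+2])).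
rewrite card_imset ?card_ord //; last exact: Some_inj.
by apply=> _ _ /imsetP [i _ ->] /imsetP [j _ ->]; rewrite !nbhd_star_leaf.
Qed.

End Star.

Section StarFunctigraph.
Variables (n : nat) (b : bool).

Definition star_map (x : option 'I_n.+2) : option 'I_n.+2 :=
  if b && (x == None) then Some ord0 else None.

Local Notation F := (functigraph (@star n) star_map).

Lemma functigraph_star_sym : symmetric F.
Proof. by case=> u [] v //=; rewrite star_sym. Qed.

Lemma nbhd_F_G1_leaf i : nbhd F (inl (Some i)) = [set inl None; inr None].
Proof. by apply/setP => -[[j|]|[j|]]; rewrite !inE /= /star_map ?andbF. Qed.

Lemma nbhd_F_G2_twin_leaf : b -> nbhd F (inr (Some ord0)) = [set inl None; inr None].
Proof.
by move=> b_true; apply/setP => -[[j|]|[j|]]; rewrite !inE /= /star_map ?b_true.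
Qed.

Lemma nbhd_F_G2_leaf i : ~~ (b && (i == ord0)) -> nbhd F (inr (Some i)) = [set inr None].
Proof.
move=> not_twin; apply/setP => -[[j|]|[j|]]; rewrite !inE //= /star_map /= ?andbT ?andbF //.
by case: b not_twin => //=; apply: contraNF => /eqP [->].
Qed.

Lemma deg_F_G1_centre : 3 <= deg F (inl None).
Proof.
apply: (@deg_ge _ _ _ [:: inl (Some ord0); inl (Some ord_max); inr (star_map None)]) => //.
by move=> z; rewrite !inE => /orP [/eqP ->|/orP [] /eqP ->]; rewrite //= eqxx.
Qed.

Lemma deg_F_G2_centre : 3 <= deg F (inr None).
Proof.
apply: (@deg_ge _ _ _ [:: inr (Some ord0); inr (Some ord_max); inl (Some ord0)]) => //.
by move=> z; rewrite !inE => /orP [/eqP ->|/orP [] /eqP ->]; rewrite //= /star_map andbF.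
Qed.

Definition G1_leaves : {set option 'I_n.+2 + option 'I_n.+2} :=
  [set inl (Some i) | i : 'I_n.+2].

Definition F_twins := if b then inr (Some ord0) |: G1_leaves else G1_leaves.

Lemma card_F_twins : #|F_twins| = n.+2 + b.
Proof.
have card_G1_leaves : #|G1_leaves| = n.+2 by rewrite card_imset ?card_ord // => i j [].
rewrite /F_twins; case: b; last by rewrite card_G1_leaves addn0.
have fresh : inr (Some ord0) \notin G1_leaves by apply/imsetP => -[i _].
by rewrite cardsU1 fresh card_G1_leaves addnC.
Qed.

Lemma nbhd_F_twins : {in F_twins, forall x, nbhd F x = [set inl None; inr None]}.
Proof.
have nbhd_G1_leaf x : x \in G1_leaves -> nbhd F x = [set inl None; inr None].
  by move=> /imsetP [i _ ->]; apply: nbhd_F_G1_leaf.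
rewrite /F_twins; case: b nbhd_F_G2_twin_leaf => // G2_twin_leaf x.
by case/setU1P => [->|]; [apply: G2_twin_leaf | apply: nbhd_G1_leaf].
Qed.

Lemma functigraph_star_Dist : is_Dist F (n.+2 + b).
Proof.
split=> [|t]; last first.
  move=> /(twins_card_le functigraph_star_sym (S := F_twins)); rewrite card_F_twins.
  by apply=> x y /nbhd_F_twins -> /nbhd_F_twins ->.
(* [minn (deg x) 3] is 3 at the two centres, 2 on the twins and 1 on the other
   leaves of G_2. *)
apply: (distinguishing_of_decode (m := 3)
  (f := fun x : option 'I_n.+2 + option 'I_n.+2 => match x with
     | inl None => 1 | inr None => 2 | inl (Some i) => i.+1
     | inr (Some i) => if b && (i == ord0) then n.+3 else i.+1 end)
  (decode := fun l k =>
     if k == 3 then (if l == 1 then inl None else inr None)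
     else if k == 2 then (if l == n.+3 then inr (Some ord0) else inl (Some (inord l.-1)))
     else inr (Some (inord l.-1)))).
  case=> [[i|]|[i|]] //=; first by have := ltn_ord i; lia.
  by case: b; case: (i == ord0) => /=; have := ltn_ord i; lia.
case=> [[i|]|[i|]].
- by rewrite /deg nbhd_F_G1_leaf cards2 /= eqSS ltn_eqF ?inord_val.
- by rewrite (minn_idPr deg_F_G1_centre).
- case: (b && (i == ord0)) / andP => [[b_true /eqP ->]|not_twin].
    by rewrite /deg nbhd_F_G2_twin_leaf // cards2 /= eqxx.
  by rewrite /deg nbhd_F_G2_leaf ?cards1 /= ?inord_val //; apply/andP.
- by rewrite (minn_idPr deg_F_G2_centre).
Qed.

End StarFunctigraph.

Theorem lemma2p7 (t : nat) : 4 <= t ->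
  exists (T : finType) (e : rel T) (g : T -> T) (d1 d2 : nat),
    simple_graph e /\ connected_graph e /\
    is_Dist e d1 /\ is_Dist (functigraph e g) d2 /\ d1 + d2 = t.
Proof.
move=> t_ge4; pose n := t./2 - 2.
exists (option 'I_n.+2), (@star n), (@star_map n (odd t)), n.+2, (n.+2 + odd t).
split; first exact: star_simple.
split; first exact: star_connected.
split; first exact: star_Dist.
split; first exact: functigraph_star_Dist.
have := odd_double_half t; rewrite /n -addnn; case: (odd t) => /=; lia.
Qed.
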